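(* Let $f : M^* \to \mathbb{R}^3$ be a trivalent polyhedral surface with nonvanishing edge lengths, with the three face normals at every vertex linearly independent and adjacent faces satisfying $n_l \neq \pm n_r$. For $t \in (-\epsilon,\epsilon)$ let $f_t$ be the polyhedral surface obtained by offsetting every face in parallel by the same distance $t$ in the direction of its normal, i.e. with the same face normals $n$ and heights $h_\phi + t$. Then for every face $\phi \in F^*$, \[ H_\phi = \frac12 \frac{d}{dt}\mathrm{Area}(f_t(\phi))\Big|_{t=0}. \]
   Context: Let $M=(V,E,F)$ be a cellular decomposition of an oriented surface without boundary (each face having finitely many edges), and $M^*=(V^*,E^*,F^* )$ its dual decomposition; faces of $M^*$ correspond bijectively to vertices of $M$. A polyhedral surface is a map $f : V^* \to \mathbb{R}^3$ such that the vertices of each face $\phi \in F^*$ are coplanar (faces may self-intersect). It is trivalent if every vertex of $M^*$ has degree 3. For each face $\phi$, $n_\phi \in \mathbb{S}^2$ is its unit normal (compatible with the orientation) and $h_\phi = \langle f_i, n_\phi\rangle$ for any vertex $i$ of $\phi$ is its height; the vertices of a trivalent surface are determined by $(n,h)$ as intersections of three face planes. For an oriented edge from $i$ to $j$, the left face $l$ is the face whose positively oriented boundary traverses $i \to j$, and the right face $r$ is the other face containing the edge. The edge length is $\ell_{ij} = \|f_j - f_i\|$ and the dihedral angle $\alpha_{ij} \in (-\pi,\pi)$ is defined by $\cos\alpha_{ij} = \langle n_l, n_r\rangle$ and $\sin\alpha_{ij} = \langle n_l \times n_r, (f_j - f_i)/\|f_j-f_i\|\rangle$. The integrated mean curvature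 of a face is $H_\phi = \frac12\sum_{ij\in\partial\phi}\ell_{ij}\tan\frac{\alpha_{ij}}{2}$. The signed area of a face $\phi$ with boundary vertices $i_1,\dots,i_m$ in positive cyclic order is $\mathrm{Area}(f(\phi)) = \frac12\sum_{s=1}^m \langle f_{i_s}\times f_{i_{s+1}}, n_\phi\rangle$ (indices mod $m$). *)

From Stdlib Require Import Reals Lra List.
From Coquelicot Require Import Coquelicot.
Import ListNotations.
Open Scope R_scope.

Definition vec : Type := (R * R * R)%type.

Definition vadd (u v : vec) : vec :=
  let '(u1, u2, u3) := u in let '(v1, v2, v3) := v in (u1 + v1, u2 + v2, u3 + v3).
Definition vscal (a : R) (u : vec) : vec :=
  let '(u1, u2, u3) := u in (a * u1, a * u2, a * u3).
Definition vopp (u : vec) : vec := vscal (-1) u.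
Definition vsub (u v : vec) : vec := vadd u (vopp v).
Definition vzero : vec := (0, 0, 0).
Definition dot (u v : vec) : R :=
  let '(u1, u2, u3) := u in let '(v1, v2, v3) := v in u1 * v1 + u2 * v2 + u3 * v3.
Definition cross (u v : vec) : vec :=
  let '(u1, u2, u3) := u in let '(v1, v2, v3) := v in
  (u2 * v3 - u3 * v2, u3 * v1 - u1 * v3, u1 * v2 - u2 * v1).
Definition vnorm (u : vec) : R := sqrt (dot u u).

Definition lin_indep3 (a b c : vec) : Prop :=
  forall l1 l2 l3 : R,
    vadd (vscal l1 a) (vadd (vscal l2 b) (vscal l3 c)) = vzero ->
    l1 = 0 /\ l2 = 0 /\ l3 = 0.

(* Oriented boundary edges of a face whose boundary vertices, in positive
   cyclic order, are the list s = [i1; ...; im]: (i1,i2), ..., (im,i1). *)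
Definition cyc_edges {V : Type} (s : list V) : list (V * V) :=
  match s with
  | [] => []
  | x :: t => combine s (t ++ [x])
  end.

Definition sumR {A : Type} (g : A -> R) (l : list A) : R :=
  fold_right Rplus 0 (map g l).

(* The combinatorics of M^*: every oriented edge i->j of a face phi lies on the
   boundary of no other face in that orientation (phi is its left face), and it
   is traversed in the opposite direction j->i by some face r (its right face):
   an oriented surface without boundary. *)
Definition closed_oriented {V F : Type} (bd : F -> list V) : Prop :=
  forall (phi : F) (i j : V), In (i, j) (cyc_edges (bd phi)) ->
    (forall psi : F, In (i, j) (cyc_edges (bd psi)) -> psi = phi) /\
    (exists r : F, In (j, i) (cyc_edges (bd r))).

(* Dihedral angle alpha of the oriented edge from fi to fj with left face normal
   nl and right face normal nr. *)
Definition dihedral_angle (nl nr fi fj : vec) (alpha : R) : Prop :=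
  - PI < alpha < PI /\
  cos alpha = dot nl nr /\
  sin alpha = dot (cross nl nr) (vscal (/ vnorm (vsub fj fi)) (vsub fj fi)).

Definition face_area {V : Type} (p : V -> vec) (nrm : vec) (s : list V) : R :=
  / 2 * sumR (fun e : V * V => dot (cross (p (fst e)) (p (snd e))) nrm) (cyc_edges s).

Definition mean_curv {V : Type} (p : V -> vec) (alpha : V -> V -> R) (s : list V) : R :=
  / 2 * sumR (fun e : V * V =>
                vnorm (vsub (p (snd e)) (p (fst e))) * tan (alpha (fst e) (snd e) / 2))
             (cyc_edges s).

(* Offsetting every face plane by t moves each vertex affinely, f_i + t w_i, where
   w_i is the unique vector with <w_i, n> = 1 for the three normals n at i.  The
   derivative of the shoelace area then splits edge by edge, up to a telescoping
   sum, into (1/2) <(f_j - f_i) x n_phi, w_i + w_j>.  Since the edge is orthogonal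
   to both adjacent normals and <w, n_l> = <w, n_r> = 1, a Gram-determinant
   computation identifies <(f_j - f_i) x n_l, w> with l_ij tan(alpha_ij / 2). *)

From Stdlib Require Import Reals List Lra Lia.
From Coquelicot Require Import Coquelicot.
Import ListNotations.
Open Scope R_scope.

Ltac vec_ring :=
  repeat match goal with v : vec |- _ => destruct v as [[? ?] ?] end;
  unfold vzero; simpl;
  try (apply pair_equal_spec; split; [apply pair_equal_spec; split |]);
  ring.

Lemma dot_vaddl u v w : dot (vadd u v) w = dot u w + dot v w.
Proof. vec_ring. Qed.

Lemma dot_vaddr u v w : dot u (vadd v w) = dot u v + dot u w.
Proof. vec_ring. Qed.

Lemma dot_vscall a u w : dot (vscal a u) w = a * dot u w.
Proof. vec_ring. Qed.

Lemma dot_vscalr a u w : dot u (vscal a w) = a * dot u w.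
Proof. vec_ring. Qed.

Lemma dot_vsubl u v w : dot (vsub u v) w = dot u w - dot v w.
Proof. vec_ring. Qed.

Lemma dot_self_ge0 u : 0 <= dot u u.
Proof. destruct u as [[a b] c]; simpl; nra. Qed.

Lemma dot_self_eq0 u : dot u u = 0 -> u = vzero.
Proof.
  destruct u as [[a b] c]; simpl; intro H.
  assert (a = 0) by nra; assert (b = 0) by nra; assert (c = 0) by nra.
  subst; reflexivity.
Qed.

Lemma vsub_eq0 u v : vsub u v = vzero -> u = v.
Proof.
  destruct u as [[a b] c], v as [[a' b'] c']; simpl; intro H.
  injection H; intros; f_equal; [f_equal |]; lra.
Qed.

Lemma vscal_inj a u v : a <> 0 -> vscal a u = vscal a v -> u = v.
Proof.
  destruct u as [[x y] z], v as [[x' y'] z']; simpl; intros Ha H.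
  injection H; intros; f_equal; [f_equal |]; apply (Rmult_eq_reg_l a); auto.
Qed.

Lemma vnorm_sqr u : vnorm u * vnorm u = dot u u.
Proof. apply sqrt_sqrt, dot_self_ge0. Qed.

Lemma dot_unit u : vnorm u = 1 -> dot u u = 1.
Proof. intro H; rewrite <- vnorm_sqr, H; ring. Qed.

Lemma unit_parallel u v : dot u u = 1 -> dot v v = 1 ->
  dot u v * dot u v = 1 -> u = v \/ u = vopp v.
Proof.
  intros Hu Hv Huv.
  assert (Hpm : (dot u v - 1) * (dot u v + 1) = 0) by lra.
  destruct (Rmult_integral _ _ Hpm) as [H | H]; [left | right]; apply vsub_eq0, dot_self_eq0.
  - replace (dot (vsub u v) (vsub u v)) with (dot u u - 2 * dot u v + dot v v) by vec_ring.
    lra.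
  - replace (dot (vsub u (vopp v)) (vsub u (vopp v))) with (dot u u + 2 * dot u v + dot v v)
      by vec_ring.
    lra.
Qed.

Definition det3 (a b c : vec) : R := dot a (cross b c).

(* Cramer's rule, in the two forms of the reciprocal-basis identity. *)
Lemma det3_scal_vec a b c w :
  vscal (det3 a b c) w =
  vadd (vscal (dot w (cross b c)) a)
       (vadd (vscal (dot w (cross c a)) b) (vscal (dot w (cross a b)) c)).
Proof. unfold det3; vec_ring. Qed.

Lemma det3_scal_vec_dual a b c x :
  vscal (det3 a b c) x =
  vadd (vscal (dot x a) (cross b c))
       (vadd (vscal (dot x b) (cross c a)) (vscal (dot x c) (cross a b))).
Proof. unfold det3; vec_ring. Qed.

Lemma det3_neq0 a b c : lin_indep3 a b c -> det3 a b c <> 0.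
Proof.
  intros Hind Hdet.
  destruct (Req_dec (dot (cross b c) (cross b c)) 0) as [Hbc | Hbc].
  - apply dot_self_eq0 in Hbc.
    destruct (Req_dec (dot b b) 0) as [Hb | Hb].
    + apply dot_self_eq0 in Hb; subst b.
      destruct (Hind 0 1 0) as (_ & H & _); [vec_ring | lra].
    + destruct (Hind 0 (- dot b c) (dot b b)) as (_ & _ & H); [| contradiction].
      transitivity (cross (cross b c) b); [vec_ring | rewrite Hbc; vec_ring].
  - destruct (Hind (dot (cross b c) (cross b c)) (dot (cross b c) (cross c a))
                   (dot (cross b c) (cross a b))) as (H & _); [| contradiction].
    rewrite <- det3_scal_vec, Hdet; vec_ring.
Qed.

Lemma eq_of_dot3 a b c x y : lin_indep3 a b c ->
  dot x a = dot y a -> dot x b = dot y b -> dot x c = dot y c -> x = y.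
Proof.
  intros Hind Ha Hb Hc.
  apply (vscal_inj (det3 a b c)); [now apply det3_neq0 |].
  now rewrite !det3_scal_vec_dual, Ha, Hb, Hc.
Qed.

(* Cauchy-Binet: a product of two triple products is the determinant of the
   matrix of mutual dot products. *)
Lemma triple_product_mul d n n' v :
  dot (cross d n) v * dot (cross n n') d =
  dot d d * (dot n n * dot v n' - dot n n' * dot v n)
  - dot d n * (dot n d * dot v n' - dot n n' * dot v d)
  + dot d n' * (dot n d * dot v n - dot n n * dot v d).
Proof. vec_ring. Qed.

Lemma tan_half_mul_sin a : - PI < a < PI -> tan (a / 2) * sin a = 1 - cos a.
Proof.
  intros Ha. assert (Hc : 0 < cos (a / 2)) by (apply cos_gt_0; lra).
  replace a with (2 * (a / 2)) at 2 3 by field.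
  rewrite sin_2a, cos_2a_sin. unfold tan. field. lra.
Qed.

Lemma sin_dihedral_neq0 nl nr p q alpha :
  vnorm nl = 1 -> vnorm nr = 1 -> nl <> nr -> nl <> vopp nr ->
  dihedral_angle nl nr p q alpha -> sin alpha <> 0.
Proof.
  intros Hl Hr Hne Hneo (_ & Hcos & _) Hsin.
  pose proof (sin2_cos2 alpha) as Hpy; unfold Rsqr in Hpy.
  rewrite Hsin, Hcos in Hpy.
  destruct (unit_parallel nl nr) as [H | H]; auto using dot_unit; lra.
Qed.

(* Multiplying both sides by sin alpha * l, the left side becomes l^2 (1 - cos alpha)
   by Cauchy-Binet, and so does the right side by the half-angle formula. *)
Lemma dihedral_edge_tan nl nr p q v alpha :
  vnorm nl = 1 -> vnorm nr = 1 -> nl <> nr -> nl <> vopp nr ->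
  vnorm (vsub q p) <> 0 -> dot (vsub q p) nl = 0 -> dot (vsub q p) nr = 0 ->
  dot v nl = 1 -> dot v nr = 1 -> dihedral_angle nl nr p q alpha ->
  dot (cross (vsub q p) nl) v = vnorm (vsub q p) * tan (alpha / 2).
Proof.
  intros Hl Hr Hne Hneo Hd Hdl Hdr Hvl Hvr Hang.
  pose proof (sin_dihedral_neq0 _ _ _ _ _ Hl Hr Hne Hneo Hang) as Hsin0.
  destruct Hang as (Hrange & Hcos & Hsin).
  set (d := vsub q p) in *.
  assert (Hsin_d : sin alpha * vnorm d = dot (cross nl nr) d).
  { rewrite Hsin, dot_vscalr. field. exact Hd. }
  apply (Rmult_eq_reg_r (sin alpha * vnorm d));
    [| apply Rmult_integral_contrapositive_currified; assumption].
  rewrite Hsin_d, triple_product_mul, Hdl, Hdr, Hvl, Hvr, (dot_unit nl Hl), <- Hcos,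
    <- vnorm_sqr.
  transitivity (vnorm d * vnorm d * (1 - cos alpha)); [ring |].
  rewrite <- (tan_half_mul_sin _ Hrange), <- Hsin_d; ring.
Qed.

Lemma in_cyc_edges {V : Type} (s : list V) i j :
  In (i, j) (cyc_edges s) -> In i s /\ In j s.
Proof.
  destruct s as [| x t]; unfold cyc_edges; [simpl; tauto |]; intro H; split.
  - exact (in_combine_l _ _ _ _ H).
  - apply in_combine_r, in_app_or in H; simpl in *; tauto.
Qed.

Lemma sumR_ext {A : Type} (g1 g2 : A -> R) l :
  (forall e, In e l -> g1 e = g2 e) -> sumR g1 l = sumR g2 l.
Proof.
  unfold sumR; induction l as [| a l IH]; simpl; intro H; [reflexivity |].
  rewrite H, IH by auto; reflexivity.
Qed.

Lemma sumR_plus {A : Type} (g1 g2 : A -> R) l :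
  sumR (fun e => g1 e + g2 e) l = sumR g1 l + sumR g2 l.
Proof. unfold sumR; induction l as [| a l IH]; simpl; [ring | rewrite IH; ring]. Qed.

Lemma sumR_minus {A : Type} (g1 g2 : A -> R) l :
  sumR (fun e => g1 e - g2 e) l = sumR g1 l - sumR g2 l.
Proof. unfold sumR; induction l as [| a l IH]; simpl; [ring | rewrite IH; ring]. Qed.

Lemma sumR_scal {A : Type} c (g : A -> R) l :
  sumR (fun e => c * g e) l = c * sumR g l.
Proof. unfold sumR; induction l as [| a l IH]; simpl; [ring | rewrite IH; ring]. Qed.

Lemma sumR_rcons {A : Type} (g : A -> R) l x : sumR g (l ++ [x]) = g x + sumR g l.
Proof. unfold sumR; induction l as [| a l IH]; simpl; [ring | rewrite IH; ring]. Qed.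

Lemma sumR_combine_fst {A B : Type} (g : A -> R) (l1 : list A) (l2 : list B) :
  length l1 = length l2 -> sumR (fun e => g (fst e)) (combine l1 l2) = sumR g l1.
Proof.
  unfold sumR; revert l2; induction l1 as [| a l1 IH]; intros [| b l2] H;
    simpl in *; try discriminate; [reflexivity | rewrite IH; auto].
Qed.

Lemma sumR_combine_snd {A B : Type} (g : B -> R) (l1 : list A) (l2 : list B) :
  length l1 = length l2 -> sumR (fun e => g (snd e)) (combine l1 l2) = sumR g l2.
Proof.
  unfold sumR; revert l2; induction l1 as [| a l1 IH]; intros [| b l2] H;
    simpl in *; try discriminate; [reflexivity | rewrite IH; auto].
Qed.

Lemma sumR_cyc_edges_telescope {V : Type} (g : V -> R) (s : list V) :
  sumR (fun e => g (snd e) - g (fst e)) (cyc_edges s) = 0.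
Proof.
  rewrite sumR_minus. destruct s as [| x t]; unfold cyc_edges; [unfold sumR; simpl; ring |].
  assert (Hlen : length (x :: t) = length (t ++ [x])) by (rewrite length_app; simpl; lia).
  rewrite (sumR_combine_fst g _ _ Hlen), (sumR_combine_snd g _ _ Hlen), sumR_rcons.
  unfold sumR; simpl; ring.
Qed.

Lemma is_derive_sumR {A : Type} (G : A -> R -> R) (D : A -> R) l x :
  (forall e, In e l -> is_derive (G e) x (D e)) ->
  is_derive (fun t => sumR (fun e => G e t) l) x (sumR D l).
Proof.
  unfold sumR; induction l as [| a l IH]; simpl; intro H.
  - auto_derive; [exact I | reflexivity].
  - apply (is_derive_plus (G a) (fun t => fold_right Rplus 0 (map (fun e => G e t) l)));
      auto.
Qed.

Lemma face_area_ext {V : Type} (p p' : V -> vec) m s :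
  (forall i, p i = p' i) -> face_area p m s = face_area p' m s.
Proof.
  intro H; unfold face_area; f_equal; apply sumR_ext; intros; now rewrite !H.
Qed.

Lemma is_derive_cross_affine p q p' q' m :
  is_derive (fun t => dot (cross (vadd p (vscal t q)) (vadd p' (vscal t q'))) m) 0
    (dot (cross q p') m + dot (cross p q') m).
Proof.
  destruct p as [[? ?] ?], q as [[? ?] ?], p' as [[? ?] ?], q' as [[? ?] ?],
    m as [[? ?] ?]; simpl.
  auto_derive; [exact I | ring].
Qed.

Lemma dot_cross_edge_split pi pj qi qj m :
  dot (cross (vsub pj pi) m) (vadd qi qj) =
  (dot (cross qi pj) m + dot (cross pi qj) m) + (dot (cross qj pj) m - dot (cross qi pi) m).
Proof. vec_ring. Qed.

(* The shoelace derivative differs from this edge-wise form by the telescoping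
   sum of the terms <q_k x p_k, m>. *)
Lemma is_derive_face_area_affine {V : Type} (p q : V -> vec) m s :
  is_derive (fun t => face_area (fun i => vadd (p i) (vscal t (q i))) m s) 0
    (/ 2 * sumR (fun e => dot (cross (vsub (p (snd e)) (p (fst e))) m)
                              (vadd (q (fst e)) (q (snd e)))) (cyc_edges s)).
Proof.
  set (g := fun k => dot (cross (q k) (p k)) m).
  rewrite (sumR_ext _ (fun e => (dot (cross (q (fst e)) (p (snd e))) m
                                 + dot (cross (p (fst e)) (q (snd e))) m)
                                + (g (snd e) - g (fst e))))
    by (intros; apply dot_cross_edge_split).
  rewrite sumR_plus, sumR_cyc_edges_telescope, Rplus_0_r.
  apply is_derive_scal, (is_derive_sumR (fun e t =>
    dot (cross (vadd (p (fst e)) (vscal t (q (fst e))))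
               (vadd (p (snd e)) (vscal t (q (snd e))))) m)).
  intros; apply is_derive_cross_affine.
Qed.

(* The velocity is read off at t = eps / 2; a point is determined by its heights
   over three independent normals, which forces the motion to be affine in t. *)
Lemma parallel_offset_affine (V F : Type) (bd : F -> list V) (n : F -> vec) (h : F -> R)
  (f : V -> vec) (ft : R -> V -> vec) (eps : R) :
  0 < eps ->
  (forall phi i, In i (bd phi) -> dot (f i) (n phi) = h phi) ->
  (forall i, exists a b c, In i (bd a) /\ In i (bd b) /\ In i (bd c) /\
                           lin_indep3 (n a) (n b) (n c)) ->
  (forall t, - eps < t < eps ->
     forall phi i, In i (bd phi) -> dot (ft t i) (n phi) = h phi + t) ->
  exists w : V -> vec,
    (forall phi i, In i (bd phi) -> dot (w i) (n phi) = 1) /\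
    (forall t i, - eps < t < eps -> ft t i = vadd (f i) (vscal t (w i))).
Proof.
  intros Heps Hplane Hvert Hft.
  set (t0 := eps / 2).
  assert (Ht0 : - eps < t0 < eps) by (unfold t0; lra).
  exists (fun i => vscal (/ t0) (vsub (ft t0 i) (f i))).
  assert (Hw : forall phi i, In i (bd phi) ->
            dot (vscal (/ t0) (vsub (ft t0 i) (f i))) (n phi) = 1).
  { intros phi i Hi.
    rewrite dot_vscall, dot_vsubl, Hft, Hplane by assumption.
    field; unfold t0; lra. }
  split; [exact Hw |].
  intros t i Ht.
  destruct (Hvert i) as (a & b & c & Ha & Hb & Hc & Hind).
  apply (eq_of_dot3 _ _ _ _ _ Hind);
    rewrite dot_vaddl, dot_vscall, Hw, Hplane, Hft by assumption; ring.
Qed.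

Theorem mainTheorem2
  (V F : Type) (bd : F -> list V)
  (f : V -> vec) (n : F -> vec) (h : F -> R)
  (alpha : V -> V -> R) (eps : R) (ft : R -> V -> vec)
  (Hsurf : closed_oriented bd)
  (Hunit : forall phi, vnorm (n phi) = 1)
  (Hplane : forall phi i, In i (bd phi) -> dot (f i) (n phi) = h phi)
  (Htri : forall i : V, exists a b c : F,
            a <> b /\ a <> c /\ b <> c /\
            (forall phi, In i (bd phi) <-> (phi = a \/ phi = b \/ phi = c)) /\
            lin_indep3 (n a) (n b) (n c))
  (Hlen : forall phi i j, In (i, j) (cyc_edges (bd phi)) ->
            vnorm (vsub (f j) (f i)) <> 0)
  (Hadj : forall phi r i j, In (i, j) (cyc_edges (bd phi)) ->
            In (j, i) (cyc_edges (bd r)) ->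
            n phi <> n r /\ n phi <> vopp (n r))
  (Halpha : forall phi r i j, In (i, j) (cyc_edges (bd phi)) ->
            In (j, i) (cyc_edges (bd r)) ->
            dihedral_angle (n phi) (n r) (f i) (f j) (alpha i j))
  (Heps : 0 < eps)
  (Hft : forall t, - eps < t < eps ->
            forall phi i, In i (bd phi) -> dot (ft t i) (n phi) = h phi + t) :
  forall phi : F,
    ex_derive (fun t => face_area (ft t) (n phi) (bd phi)) 0 /\
    mean_curv f alpha (bd phi) =
      / 2 * Derive (fun t => face_area (ft t) (n phi) (bd phi)) 0.
Proof.
  intros phi.
  assert (Hvert : forall i, exists a b c, In i (bd a) /\ In i (bd b) /\ In i (bd c) /\
                                         lin_indep3 (n a) (n b) (n c)).
  { intros i; destruct (Htri i) as (a & b & c & _ & _ & _ & Hin & Hind).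
    exists a, b, c; rewrite !Hin; intuition auto. }
  destruct (parallel_offset_affine V F bd n h f ft eps Heps Hplane Hvert Hft)
    as (w & Hw & Hmove).
  set (X := fun e : V * V => dot (cross (vsub (f (snd e)) (f (fst e))) (n phi))
                                 (vadd (w (fst e)) (w (snd e)))).
  assert (HA : is_derive (fun t => face_area (ft t) (n phi) (bd phi)) 0
                 (/ 2 * sumR X (cyc_edges (bd phi)))).
  { apply (is_derive_ext_loc (fun t => face_area (fun i => vadd (f i) (vscal t (w i)))
                                                 (n phi) (bd phi))).
    - apply (locally_interval _ 0 (- eps) eps); simpl; try lra.
      intros t Ht1 Ht2; apply face_area_ext; intros i; symmetry; apply Hmove; simpl; lra.
    - apply is_derive_face_area_affine. }
  split; [eexists; exact HA |].
  replace (Derive _ 0) with (/ 2 * sumR X (cyc_edges (bd phi)))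
    by (symmetry; apply is_derive_unique, HA).
  unfold mean_curv.
  rewrite (sumR_ext _ (fun e => / 2 * X e)), sumR_scal; [ring |].
  intros [i j] Hij; unfold X; simpl.
  destruct (Hsurf phi i j Hij) as [_ [r Hr]].
  destruct (in_cyc_edges _ _ _ Hij) as [Hi Hj], (in_cyc_edges _ _ _ Hr) as [Hj' Hi'].
  destruct (Hadj phi r i j Hij Hr) as [Hne Hneo].
  assert (Hdl : dot (vsub (f j) (f i)) (n phi) = 0)
    by (rewrite dot_vsubl, !Hplane by assumption; ring).
  assert (Hdr : dot (vsub (f j) (f i)) (n r) = 0)
    by (rewrite dot_vsubl, !Hplane by assumption; ring).
  pose proof (Hlen _ _ _ Hij) as Hl.
  rewrite dot_vaddr, !(dihedral_edge_tan (n phi) (n r) (f i) (f j) _ (alpha i j)) by auto.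
  lra.
Qed.
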